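(* For an undirected graph $G=(V,E)$ without self-loops and $\epsilon>0$, let $W_{G,\epsilon}$ be the symmetric matrix with $[W_{G,\epsilon}]_{ij}=\epsilon$ if $\{i,j\}\in E$, $0$ for distinct non-adjacent $i,j$, and diagonal entries chosen so that each row sums to $1$. For $n\ge1$ let $G_n'$ be the graph on the $2n$ vertices $u_1,\dots,u_n,v_1,\dots,v_n$ consisting of a complete graph on $\{u_1,\dots,u_n\}$, a complete graph on $\{v_1,\dots,v_n\}$, and the edges $\{u_i,v_i\}$, $i=1,\dots,n$. Consider the scalar ($d=1$) iteration $$x(t+1)=W_{G_n',\epsilon}\,P_\Omega\big[x(t)-\alpha(t)g(t)\big],\quad t\ge1,$$ with $\alpha(t)=1/\sqrt t$, $\Omega=[-a,a]$, initial condition $x_i(1)=0$ for all nodes, local functions $f_{u_i}(x)=\gamma|x|$ and $f_{v_i}(x)=\frac12|x-1|$, and $g_i(t)$ a subgradient of $f_i$ at $x_i(t)$. Then there exist constants $\gamma>1$ and $a>0$ (one may take $\gamma=3$, $a=6$), independent of $n$ and $\epsilon$, such that for every $n\ge4$ and every $\epsilon\in(0,1/n]$ there is a choice of subgradients $g_i(t)$ for all $i,t$ for which the resulting trajectory satisfies: (i) $x_{u_i}(t)=x^*=0$ for all $i$ and all $t$, where $x^*=0$ is the minimizer of $F=\frac{1}{2n}\sum_i f_i$ over $\Omega$; (ii) $x_{v_i}(t)-x^*$ is nonnegative and independent of $i$ for every $t$; and (iii) there exists $t_1$ such that for all $t\ge t_1$ and all $i$, $x_{v_i}(t)-x^*\ge\frac{\epsilon^{-1}}{16\sqrt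 t}$.
   Context: $P_\Omega$ denotes projection onto $\Omega$ applied to each entry. Since the maximum degree of $G_n'$ is $n$, $W_{G_n',\epsilon}$ is nonnegative and stochastic exactly when $\epsilon\le 1/n$; its diagonal entries are $1-n\epsilon$. *)

From Stdlib Require Import Reals Lra List Bool Arith.
Import ListNotations.
Open Scope R_scope.

(* A vertex of G_n' is (false, i) = u_{i+1} or (true, i) = v_{i+1}, 0 <= i < n. *)
Definition vtx := (bool * nat)%type.

Definition veqb (p q : vtx) : bool :=
  Bool.eqb (fst p) (fst q) && Nat.eqb (snd p) (snd q).

Definition vertices (n : nat) : list vtx :=
  map (fun i => (false, i)) (seq 0 n) ++ map (fun i => (true, i)) (seq 0 n).

Definition adjG' (n : nat) (p q : vtx) : bool :=
  Nat.ltb (snd p) n && Nat.ltb (snd q) n &&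
  ( (Bool.eqb (fst p) (fst q) && negb (Nat.eqb (snd p) (snd q)))
  || (negb (Bool.eqb (fst p) (fst q)) && Nat.eqb (snd p) (snd q)) ).

Definition degree (V : list vtx) (adj : vtx -> vtx -> bool) (p : vtx) : nat :=
  length (filter (adj p) V).

Definition Wmat (V : list vtx) (adj : vtx -> vtx -> bool) (eps : R) (p q : vtx) : R :=
  if veqb p q then 1 - eps * INR (degree V adj p)
  else if adj p q then eps else 0.

Definition sumR {A : Type} (l : list A) (f : A -> R) : R :=
  fold_right (fun a s => f a + s) 0 l.

Definition projOmega (a x : R) : R := Rmax (- a) (Rmin a x).

Definition is_subgrad (f : R -> R) (x g : R) : Prop :=
  forall y, f y >= f x + g * (y - x).

Definition floc (gamma : R) (p : vtx) (x : R) : R :=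
  if fst p then / 2 * Rabs (x - 1) else gamma * Rabs x.

Definition Fglob (gamma : R) (n : nat) (x : R) : R :=
  / (2 * INR n) * sumR (vertices n) (fun p => floc gamma p x).

From Stdlib Require Import Reals Lra Lia List.
Open Scope R_scope.

(* The [u]-nodes stay at [x* = 0] and the [v]-nodes share one value [x_v(t)]: as
   [f_u] has a kink at [0], the [u]-subgradients can be chosen to cancel exactly the
   inflow [eps x_v] from the matching edges.  With [Omega = [-1/2, 1/2]] the [v]-nodes
   stay on the linear piece of [f_v], and
     [x_v(t+1) = (1 - 2 eps) / (1 - eps) * min (1/2, x_v(t) + 1 / (2 sqrt t))].
   Each round of averaging loses a fraction of order [eps] of [x_v], while the
   gradient step adds [1 / (2 sqrt t)]; since [sum 1/sqrt t] diverges, [x_v(t)]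
   eventually exceeds [1 / (16 eps sqrt t)].  The invariant [eps sqrt t x_v(t) <= 1]
   keeps the [u]-subgradients inside [[-3, 3]]. *)

Lemma sqrt_INR_S_pos k : 0 < sqrt (INR (S k)).
Proof. apply sqrt_lt_R0, lt_0_INR; lia. Qed.

Lemma sqrt_INR_S_sqr k : sqrt (INR (S k)) * sqrt (INR (S k)) = INR k + 1.
Proof. rewrite sqrt_sqrt, S_INR; [lra | apply pos_INR]. Qed.

Lemma inv_sqrt_INR_S_le k : / sqrt (INR (S (S k))) <= / sqrt (INR (S k)).
Proof.
  apply Rinv_le_contravar; [apply sqrt_INR_S_pos|].
  apply sqrt_le_1_alt, le_INR; lia.
Qed.

(* [xv e k] is [x_v] at time [t = k + 1], and [yv e k] is its projected gradient step. *)
Definition decay (e : R) : R := (1 - 2 * e) / (1 - e).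

Fixpoint xv (e : R) (k : nat) : R :=
  match k with
  | O => 0
  | S k' => decay e * Rmin (1/2) (xv e k' + / sqrt (INR (S k')) / 2)
  end.

Definition yv (e : R) (k : nat) : R := Rmin (1/2) (xv e k + / sqrt (INR (S k)) / 2).

Definition lower_env (e : R) (k : nat) : R := / e / (16 * sqrt (INR (S k))).

Lemma xv_S e k : xv e (S k) = decay e * yv e k.
Proof. reflexivity. Qed.

Section Recursion.

Variable e : R.
Hypothesis e_range : 0 < e <= /4.

Lemma decay_bounds : 2/3 <= decay e <= 1 - e.
Proof.
  assert (decay e * (1 - e) = 1 - 2 * e) by (unfold decay; field; lra).
  split; nra.
Qed.

Lemma one_sub_decay : (1 - decay e) * (1 - e) = e.
Proof. unfold decay. field. lra. Qed.

Lemma xv_bounds k : 0 <= xv e k <= 1/2.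
Proof.
  pose proof decay_bounds.
  induction k as [|k IH]; [simpl; lra|].
  rewrite xv_S; unfold yv.
  pose proof (Rinv_0_lt_compat _ (sqrt_INR_S_pos k)).
  assert (0 <= Rmin (1/2) (xv e k + / sqrt (INR (S k)) / 2) <= 1/2).
  { split; [apply Rmin_glb; lra | apply Rmin_l]. }
  nra.
Qed.

Lemma yv_bounds k : 0 <= yv e k <= 1/2.
Proof.
  pose proof (xv_bounds k). pose proof (Rinv_0_lt_compat _ (sqrt_INR_S_pos k)).
  split; [apply Rmin_glb; lra | apply Rmin_l].
Qed.

Lemma sqrt_yv_le k : sqrt (INR (S k)) * yv e k <= sqrt (INR (S k)) * xv e k + /2.
Proof.
  pose proof (sqrt_INR_S_pos k).
  assert (yv e k <= xv e k + / sqrt (INR (S k)) / 2) by apply Rmin_r.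
  replace (/2) with (sqrt (INR (S k)) * (/ sqrt (INR (S k)) / 2)) by (field; lra).
  rewrite <- Rmult_plus_distr_l. apply Rmult_le_compat_l; lra.
Qed.

Lemma decay_sqrt_ratio k : 2 < e * sqrt (INR (S (S k))) ->
  decay e * (1 + e / 2) * sqrt (INR (S (S k))) <= sqrt (INR (S k)).
Proof.
  intros large. pose proof decay_bounds.
  set (s := sqrt (INR (S k))). set (s' := sqrt (INR (S (S k)))) in *.
  set (q := decay e * (1 + e / 2)).
  assert (Hs : 0 < s) by apply sqrt_INR_S_pos.
  assert (Ss : s * s = INR k + 1) by apply sqrt_INR_S_sqr.
  assert (Ss' : s' * s' = INR k + 2) by (unfold s'; rewrite sqrt_INR_S_sqr, S_INR; lra).
  assert (Hq : 0 < q <= 1 - e / 2) by (unfold q; nra).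
  assert (big : 4 < (e * s') * (e * s')) by nra.
  assert (e * (s' * s') >= 2) by nra.
  assert (e / 2 <= 1 - q * q) by nra.
  assert (q * q * (s' * s') <= s * s) by nra.
  assert (0 <= q * s') by nra.
  nra.
Qed.

Lemma xv_scaled_le k : e * sqrt (INR (S k)) * xv e k <= 1.
Proof.
  pose proof decay_bounds.
  induction k as [|k IH]; [simpl; lra|].
  rewrite xv_S.
  pose proof (yv_bounds k). pose proof (sqrt_yv_le k).
  pose proof (sqrt_INR_S_pos (S k)). pose proof (sqrt_INR_S_pos k).
  destruct (Rle_lt_dec (e * sqrt (INR (S (S k)))) 2) as [small | large].
  - assert (0 <= decay e * yv e k <= 1/2) by nra.
    assert (0 <= e * sqrt (INR (S (S k)))) by nra.
    nra.
  - pose proof (decay_sqrt_ratio k large).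
    assert (e * (sqrt (INR (S k)) * yv e k) <= 1 + e / 2) by nra.
    assert (0 <= e * yv e k) by nra.
    assert (e * sqrt (INR (S (S k))) * (decay e * yv e k) * (1 + e / 2) <= 1 + e / 2)
      by nra.
    nra.
Qed.

Lemma lower_env_eq k : lower_env e k = / (16 * e) * / sqrt (INR (S k)).
Proof. unfold lower_env. pose proof (sqrt_INR_S_pos k). field. lra. Qed.

Lemma lower_env_S_le k : lower_env e (S k) <= lower_env e k.
Proof.
  rewrite !lower_env_eq. apply Rmult_le_compat_l; [|apply inv_sqrt_INR_S_le].
  apply Rlt_le, Rinv_0_lt_compat. lra.
Qed.

Lemma lower_env_S_le_third_eventually :
  exists k0, forall k, (k0 <= k)%nat -> lower_env e (S k) <= 1/3.
Proof.
  destruct (INR_unbounded (/ (e * e))) as [k0 Hk0].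
  exists k0. intros k Hk. apply le_INR in Hk.
  set (s := sqrt (INR (S (S k)))).
  assert (Hs : 0 < s) by apply sqrt_INR_S_pos.
  assert (Ss : s * s = INR k + 2) by (unfold s; rewrite sqrt_INR_S_sqr, S_INR; lra).
  assert (e * e * / (e * e) = 1) by (field; lra).
  assert (0 < e * e) by nra.
  assert (1 < (e * s) * (e * s)).
  { replace ((e * s) * (e * s)) with (e * e * (s * s)) by ring. rewrite Ss.
    apply Rle_lt_trans with (e * e * / (e * e)); [lra|].
    apply Rmult_lt_compat_l; lra. }
  assert (0 < e * s) by (apply Rmult_lt_0_compat; lra).
  assert (1 <= e * s) by nra.
  unfold lower_env. fold s.
  replace (/ e / (16 * s)) with (/ (16 * (e * s))) by (field; lra).
  assert (/ (16 * (e * s)) <= / 16) by (apply Rinv_le_contravar; lra).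
  lra.
Qed.

(* Once the envelope is below [1/3 <= decay e / 2], clipping at [1/2] cannot push
   [xv] under it; without clipping, the averaging loses [(1 - decay e) xv <= w / 12]
   while the step gains [decay e * w / 2 >= w / 3]. *)
Lemma xv_S_ge k : lower_env e (S k) <= 1/3 ->
  Rmin (lower_env e (S k)) (xv e k + / sqrt (INR (S k)) / 4) <= xv e (S k).
Proof.
  intros small. pose proof decay_bounds. pose proof (xv_bounds k).
  assert (decay_gap : 0 <= 1 - decay e <= 4 * e / 3) by (pose proof one_sub_decay; nra).
  pose proof (lower_env_S_le k) as Hmono. rewrite (lower_env_eq k) in Hmono.
  rewrite xv_S. unfold yv, Rmin at 2.
  destruct (Rle_dec (1/2) (xv e k + / sqrt (INR (S k)) / 2)) as [clip | noclip].
  - pose proof (Rmin_l (lower_env e (S k)) (xv e k + / sqrt (INR (S k)) / 4)). nra.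
  - set (w := / sqrt (INR (S k))) in *.
    set (L := / (16 * e)) in *.
    assert (0 < w) by (apply Rinv_0_lt_compat, sqrt_INR_S_pos).
    assert (0 < L) by (unfold L; apply Rinv_0_lt_compat; lra).
    assert (loss : (1 - decay e) * (L * w) <= w / 12).
    { apply Rle_trans with (4 * e / 3 * (L * w)).
      - apply Rmult_le_compat_r; [apply Rmult_le_pos|]; lra.
      - right. unfold L. field. lra. }
    destruct (Rle_lt_dec (xv e k) (L * w)) as [below | above].
    + apply Rle_trans with (xv e k + w / 4); [apply Rmin_r|].
      assert ((1 - decay e) * xv e k <= (1 - decay e) * (L * w))
        by (apply Rmult_le_compat_l; lra).
      nra.
    + apply Rle_trans with (L * w).
      { apply Rle_trans with (lower_env e (S k)); [apply Rmin_l | exact Hmono]. }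
      assert (decay e * (L * w) <= decay e * xv e k) by (apply Rmult_le_compat_l; lra).
      nra.
Qed.

Section Eventually.

Variable k0 : nat.
Hypothesis lower_env_small : forall k, (k0 <= k)%nat -> lower_env e (S k) <= 1/3.

Lemma xv_above_lower_env_persists j : (k0 <= j)%nat -> lower_env e j <= xv e j ->
  forall m, lower_env e (j + m) <= xv e (j + m).
Proof.
  intros Hj Hle m. induction m as [|m IH]; [rewrite Nat.add_0_r; exact Hle|].
  rewrite Nat.add_succ_r.
  eapply Rle_trans; [|apply xv_S_ge, lower_env_small; lia].
  rewrite Rmin_left; [lra|].
  pose proof (lower_env_S_le (j + m)).
  pose proof (Rinv_0_lt_compat _ (sqrt_INR_S_pos (j + m))). lra.
Qed.

(* Below the envelope [xv] gains at least [w / 4] per step, and the [w] are not summable. *)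
Lemma xv_reaches_lower_env_or_grows m :
  (exists j, (k0 <= j)%nat /\ lower_env e j <= xv e j) \/
  INR m * / sqrt (INR (S (k0 + m))) / 4 <= xv e (k0 + m).
Proof.
  induction m as [|m [reached | grows]].
  - right. rewrite Nat.add_0_r. pose proof (xv_bounds k0). simpl. lra.
  - left. exact reached.
  - destruct (Rle_dec (lower_env e (k0 + S m)) (xv e (k0 + S m))) as [above | below].
    + left. exists (k0 + S m)%nat. split; [lia | exact above].
    + right. rewrite Nat.add_succ_r in below |- *.
      pose proof (xv_S_ge (k0 + m) (lower_env_small (k0 + m) ltac:(lia))) as step.
      assert (gain : xv e (k0 + m) + / sqrt (INR (S (k0 + m))) / 4 <= xv e (S (k0 + m))).
      { revert step. apply Rmin_case_strong; intros; lra. }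
      pose proof (inv_sqrt_INR_S_le (k0 + m)). pose proof (pos_INR m).
      assert (INR m * / sqrt (INR (S (S (k0 + m)))) <= INR m * / sqrt (INR (S (k0 + m))))
        by (apply Rmult_le_compat_l; lra).
      rewrite S_INR. lra.
Qed.

End Eventually.

Lemma xv_eventually_above_lower_env :
  exists k1, forall k, (k1 <= k)%nat -> lower_env e k <= xv e k.
Proof.
  destruct lower_env_S_le_third_eventually as [k0 small].
  set (m := (4 * k0 + 8)%nat).
  destruct (xv_reaches_lower_env_or_grows k0 small m) as [[j [Hj reached]] | grows].
  - exists j. intros k Hk. replace k with (j + (k - j))%nat by lia.
    apply (xv_above_lower_env_persists k0); assumption.
  - exfalso. pose proof (xv_bounds (k0 + m)).
    set (s := sqrt (INR (S (k0 + m)))) in grows.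
    assert (Hs : 0 < s) by apply sqrt_INR_S_pos.
    assert (Ss : s * s = INR k0 + INR m + 1) by (unfold s; rewrite sqrt_INR_S_sqr, plus_INR; lra).
    assert (Hm : INR m = 4 * INR k0 + 8) by (unfold m; rewrite plus_INR, mult_INR; simpl; lra).
    pose proof (pos_INR k0).
    assert (2 * s < INR m) by nra.
    assert (INR m * / s / 4 * (4 * s) = INR m) by (field; lra).
    nra.
Qed.

End Recursion.

Lemma sumR_app {A} (l1 l2 : list A) f : sumR (l1 ++ l2) f = sumR l1 f + sumR l2 f.
Proof. induction l1 as [|a l1 IH]; simpl; [lra|]. rewrite IH. lra. Qed.

Lemma sumR_map {A B} (h : A -> B) l f : sumR (map h l) f = sumR l (fun j => f (h j)).
Proof. induction l as [|a l IH]; simpl; [reflexivity|]. rewrite IH. reflexivity. Qed.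

Lemma sumR_ext {A} (l : list A) f h : (forall j, In j l -> f j = h j) -> sumR l f = sumR l h.
Proof. induction l as [|a l IH]; simpl; intros H; [reflexivity|]. rewrite H, IH; auto. Qed.

Lemma sumR_const {A} (l : list A) c : sumR l (fun _ => c) = INR (length l) * c.
Proof.
  induction l as [|a l IH]; simpl length; [simpl; lra|].
  rewrite S_INR. simpl. rewrite IH. lra.
Qed.

Lemma sumR_seq_indicator n i (f : nat -> R) A B : (i < n)%nat ->
  (forall j, (j < n)%nat -> f j = if Nat.eqb j i then A else B) ->
  sumR (seq 0 n) f = A + (INR n - 1) * B.
Proof.
  intros Hi Hf.
  assert (Hout : forall j, In j (seq 0 i ++ seq (S i) (n - S i)) -> f j = B).
  { intros j Hj. apply in_app_or in Hj.
    rewrite Hf, (proj2 (Nat.eqb_neq j i)); [reflexivity| |];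
      destruct Hj as [Hj | Hj]; apply in_seq in Hj; lia. }
  replace n with (i + S (n - S i))%nat in Hf |- * by lia.
  rewrite seq_app. simpl (seq (0 + i) _).
  rewrite !sumR_app. simpl (sumR (_ :: _) _).
  rewrite Hf, Nat.eqb_refl by lia.
  rewrite (sumR_ext _ _ (fun _ => B)), (sumR_ext (seq (S i) _) _ (fun _ => B)).
  - rewrite !sumR_const, !length_seq, plus_INR, S_INR. ring.
  - intros j Hj. apply Hout, in_or_app. right. exact Hj.
  - intros j Hj. apply Hout, in_or_app. left. exact Hj.
Qed.

Lemma sumR_vertices n f : sumR (vertices n) f =
  sumR (seq 0 n) (fun j => f (false, j)) + sumR (seq 0 n) (fun j => f (true, j)).
Proof. unfold vertices. rewrite sumR_app, !sumR_map. reflexivity. Qed.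

Lemma in_vertices_lt n b i : In (b, i) (vertices n) -> (i < n)%nat.
Proof.
  unfold vertices. rewrite in_app_iff, !in_map_iff.
  intros [[j [Hj Hin]] | [j [Hj Hin]]]; apply in_seq in Hin; injection Hj; lia.
Qed.

Lemma adjG'_lt n b c i j : (i < n)%nat -> (j < n)%nat ->
  adjG' n (b, i) (c, j) = if Bool.eqb b c then negb (Nat.eqb j i) else Nat.eqb j i.
Proof.
  intros Hi Hj. unfold adjG'. cbn [fst snd].
  rewrite (proj2 (Nat.ltb_lt i n) Hi), (proj2 (Nat.ltb_lt j n) Hj), (Nat.eqb_sym i j).
  destruct b, c, (Nat.eqb j i); reflexivity.
Qed.

Lemma count_filter {A} (f : A -> bool) l :
  INR (length (filter f l)) = sumR l (fun q => if f q then 1 else 0).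
Proof.
  induction l as [|a l IH]; simpl; [reflexivity|].
  destruct (f a); simpl length; try rewrite S_INR; lra.
Qed.

Lemma degree_G' n b i : (i < n)%nat -> INR (degree (vertices n) (adjG' n) (b, i)) = INR n.
Proof.
  intros Hi. unfold degree. rewrite count_filter, sumR_vertices,
    (sumR_seq_indicator n i _ (if b then 1 else 0) (if b then 0 else 1) Hi),
    (sumR_seq_indicator n i _ (if b then 0 else 1) (if b then 1 else 0) Hi);
    [destruct b; ring | intros j Hj; rewrite adjG'_lt by lia; destruct b, (Nat.eqb j i); reflexivity ..].
Qed.

Lemma Wmat_G' n eps b c i j : (i < n)%nat -> (j < n)%nat ->
  Wmat (vertices n) (adjG' n) eps (b, i) (c, j) =
  if Bool.eqb b c then (if Nat.eqb j i then 1 - eps * INR n else eps)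
  else (if Nat.eqb j i then eps else 0).
Proof.
  intros Hi Hj. unfold Wmat. rewrite degree_G', adjG'_lt by assumption.
  unfold veqb. cbn [fst snd]. rewrite (Nat.eqb_sym i j).
  destruct b, c, (Nat.eqb j i); reflexivity.
Qed.

Lemma Wmat_G'_sum_blocks n eps b i (h : vtx -> R) hu hv : (i < n)%nat ->
  (forall j, (j < n)%nat -> h (false, j) = hu) ->
  (forall j, (j < n)%nat -> h (true, j) = hv) ->
  sumR (vertices n) (fun q => Wmat (vertices n) (adjG' n) eps (b, i) q * h q) =
  if b then eps * hu + (1 - eps) * hv else (1 - eps) * hu + eps * hv.
Proof.
  intros Hi Hu Hv. rewrite sumR_vertices,
    (sumR_seq_indicator n i _ ((if b then eps else 1 - eps * INR n) * hu)
       ((if b then 0 else eps) * hu) Hi),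
    (sumR_seq_indicator n i _ ((if b then 1 - eps * INR n else eps) * hv)
       ((if b then eps else 0) * hv) Hi);
    [destruct b; ring | intros j Hj; rewrite Wmat_G', ?Hu, ?Hv by lia;
                        destruct b, (Nat.eqb j i); reflexivity ..].
Qed.

Lemma projOmega_id a z : - a <= z <= a -> projOmega a z = z.
Proof. intros H. unfold projOmega. rewrite Rmin_right, Rmax_right; lra. Qed.

Lemma projOmega_nonneg a z : 0 <= a -> 0 <= z -> projOmega a z = Rmin a z.
Proof.
  intros Ha Hz. unfold projOmega. apply Rmax_right.
  apply Rle_trans with 0; [lra | apply Rmin_glb; lra].
Qed.

Lemma is_subgrad_scal_abs_0 gamma g : Rabs g <= gamma ->
  is_subgrad (fun x => gamma * Rabs x) 0 g.
Proof.
  intros Hg y. rewrite Rabs_R0, Rminus_0_r.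
  pose proof (Rle_abs (g * y)) as Hgy. rewrite Rabs_mult in Hgy.
  pose proof (Rabs_pos y). nra.
Qed.

Lemma is_subgrad_half_abs_sub1 x : x <= 1 -> is_subgrad (fun y => / 2 * Rabs (y - 1)) x (- / 2).
Proof.
  intros Hx y. rewrite (Rabs_left1 (x - 1)) by lra.
  pose proof (Rle_abs (1 - y)) as Hy. rewrite Rabs_minus_sym in Hy. lra.
Qed.

Lemma Fglob_0_lt gamma n y : / 2 < gamma -> (0 < n)%nat -> y <> 0 ->
  Fglob gamma n 0 < Fglob gamma n y.
Proof.
  intros Hgamma Hn Hy. unfold Fglob. rewrite !sumR_vertices. unfold floc; cbn [fst].
  rewrite !sumR_const, !length_seq, Rabs_R0, Rminus_0_l, Rabs_Ropp, Rabs_R1.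
  apply lt_0_INR in Hn.
  apply Rmult_lt_compat_l; [apply Rinv_0_lt_compat; lra|].
  pose proof (Rabs_pos_lt y Hy).
  pose proof (Rabs_triang_inv 1 y) as Htri. rewrite Rabs_R1, Rabs_minus_sym in Htri.
  assert (0 < (gamma - / 2) * Rabs y) by (apply Rmult_lt_0_compat; lra).
  nra.
Qed.

Definition xtraj (e : R) (t : nat) (p : vtx) : R := if fst p then xv e (pred t) else 0.

Definition gtraj (e : R) (t : nat) (p : vtx) : R :=
  if fst p then - / 2 else e * yv e (pred t) * sqrt (INR t) / (1 - e).

Section Trajectory.

Variable e : R.
Hypothesis e_range : 0 < e <= /4.

Lemma u_subgradient_bounds k : 0 <= e * yv e k * sqrt (INR (S k)) / (1 - e) <= 3.
Proof.
  pose proof (xv_scaled_le e e_range k). pose proof (yv_bounds e e_range k).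
  pose proof (sqrt_yv_le e k). pose proof (sqrt_INR_S_pos k).
  set (g := e * yv e k * sqrt (INR (S k)) / (1 - e)).
  assert (g * (1 - e) = e * yv e k * sqrt (INR (S k))) by (unfold g; field; lra).
  assert (e * (sqrt (INR (S k)) * yv e k) <= e * (sqrt (INR (S k)) * xv e k + /2))
    by (apply Rmult_le_compat_l; lra).
  assert (0 <= e * yv e k * sqrt (INR (S k)) <= 9/8).
  { split; [apply Rmult_le_pos; [apply Rmult_le_pos|]; lra | nra]. }
  split; nra.
Qed.

Lemma xtraj_subgrad t p : (1 <= t)%nat -> is_subgrad (floc 3 p) (xtraj e t p) (gtraj e t p).
Proof.
  intros Ht. destruct t as [|k]; [lia|]. destruct p as [[|] i]; unfold xtraj, gtraj; cbn [fst pred].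
  - apply is_subgrad_half_abs_sub1. pose proof (xv_bounds e e_range k). lra.
  - pose proof (u_subgradient_bounds k).
    apply is_subgrad_scal_abs_0. rewrite Rabs_pos_eq; lra.
Qed.

Lemma xtraj_step n t p : (1 <= t)%nat -> In p (vertices n) ->
  xtraj e (S t) p = sumR (vertices n) (fun q =>
    Wmat (vertices n) (adjG' n) e p q *
    projOmega (1/2) (xtraj e t q - / sqrt (INR t) * gtraj e t q)).
Proof.
  intros Ht Hin. destruct t as [|k]; [lia|]. destruct p as [b i].
  apply in_vertices_lt in Hin.
  pose proof (sqrt_INR_S_pos k) as Hs. pose proof (yv_bounds e e_range k).
  rewrite (Wmat_G'_sum_blocks n e b i _ (- (e * yv e k / (1 - e))) (yv e k) Hin).
  - unfold xtraj; destruct b; cbn [fst pred]; [rewrite xv_S; unfold decay|]; field; lra.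
  - intros j Hj. unfold xtraj, gtraj; cbn [fst pred].
    replace (0 - / sqrt (INR (S k)) * (e * yv e k * sqrt (INR (S k)) / (1 - e)))
      with (- (e * yv e k / (1 - e))) by (field; lra).
    apply projOmega_id.
    assert (e * yv e k / (1 - e) * (1 - e) = e * yv e k) by (field; lra).
    assert (0 <= e * yv e k <= /8) by nra.
    nra.
  - intros j Hj. unfold xtraj, gtraj; cbn [fst pred].
    pose proof (xv_bounds e e_range k). pose proof (Rinv_0_lt_compat _ Hs).
    rewrite projOmega_nonneg by lra.
    unfold yv. f_equal. field. lra.
Qed.

End Trajectory.

Lemma eps_le_quarter n eps : (4 <= n)%nat -> 0 < eps <= / INR n -> 0 < eps <= / 4.
Proof.
  intros Hn Heps. apply le_INR in Hn. simpl in Hn.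
  split; [lra|]. apply Rle_trans with (/ INR n); [lra|]. apply Rinv_le_contravar; lra.
Qed.

Theorem theorem2 :
  exists gamma a : R, gamma > 1 /\ a > 0 /\
  forall (n : nat) (eps : R), (4 <= n)%nat -> 0 < eps <= / INR n ->
  exists x g : nat -> vtx -> R,
    (forall p, In p (vertices n) -> x 1%nat p = 0) /\
    (forall (t : nat) p, (1 <= t)%nat -> In p (vertices n) ->
       is_subgrad (floc gamma p) (x t p) (g t p)) /\
    (forall (t : nat) p, (1 <= t)%nat -> In p (vertices n) ->
       x (S t) p = sumR (vertices n) (fun q =>
         Wmat (vertices n) (adjG' n) eps p q *
         projOmega a (x t q - / sqrt (INR t) * g t q))) /\
    (forall y, - a <= y <= a -> y <> 0 -> Fglob gamma n 0 < Fglob gamma n y) /\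
    (forall (t i : nat), (1 <= t)%nat -> (i < n)%nat -> x t (false, i) = 0) /\
    (forall t : nat, (1 <= t)%nat -> exists c : R, 0 <= c /\
       forall i : nat, (i < n)%nat -> x t (true, i) - 0 = c) /\
    (exists t1 : nat, forall (t i : nat), (1 <= t)%nat -> (t1 <= t)%nat -> (i < n)%nat ->
       x t (true, i) - 0 >= / eps / (16 * sqrt (INR t))).
Proof.
  exists 3, (1/2). split; [lra|]. split; [lra|].
  intros n eps Hn Heps. pose proof (eps_le_quarter n eps Hn Heps) as He.
  exists (xtraj eps), (gtraj eps).
  split; [intros [[|] i] _; reflexivity|].
  split; [intros t p Ht _; apply xtraj_subgrad; assumption|].
  split; [intros t p Ht Hin; apply xtraj_step; assumption|].
  split; [intros y _ Hy; apply Fglob_0_lt; [lra | lia | exact Hy]|].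
  split; [intros t i _ _; reflexivity|].
  split.
  - intros t _. exists (xv eps (pred t)).
    split; [apply xv_bounds; exact He | intros i _; apply Rminus_0_r].
  - destruct (xv_eventually_above_lower_env eps He) as [k1 Hk1]. exists (S k1).
    intros [|k] i Ht Hk _; [lia|]. unfold xtraj; cbn [fst pred].
    apply Rle_ge. rewrite Rminus_0_r. apply Hk1. lia.
Qed.
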